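(* Let $X=(X_n:n\ge 0)$ be an irreducible positive recurrent Markov chain on a countable state space $S$ with one-step transition matrix $P=(P(x,y):x,y\in S)$ and (unique) stationary distribution $\pi$. Fix $z\in S$, and let $(A_n:n\ge 1)$ be a sequence of finite subsets of $S$ with $z\in A_1$, $A_n\subseteq A_{n+1}$ for all $n$, and $\bigcup_n A_n=S$. Let $\tilde\pi_n$ be the truncation approximation associated with the truncation set $A_n$ (as defined in the context). Then for each $x\in S$, $\tilde\pi_n(x)\to\pi(x)$ as $n\to\infty$.
   Context: Truncation approximation: for a finite set $A\subseteq S$ with $z\in A$, put $A'=A\setminus\{z\}$ and define the row vector $\tilde\nu=(\tilde\nu(x):x\in A')$ with $\tilde\nu(x)=P(z,x)$, the column vector $\tilde e=(\tilde e(x):x\in A')$ with $\tilde e(x)=1$, and the matrix $\tilde B=(\tilde B(x,y):x,y\in A')$ with $\tilde B(x,y)=P(x,y)$. (By irreducibility, $I-\tilde B$ is nonsingular.) The truncation approximation $\tilde\pi$ is the probability vector on $S$ given by $\tilde\pi(x)=\dfrac{(\tilde\nu(I-\tilde B)^{-1})(x)}{1+\tilde\nu(I-\tilde B)^{-1}\tilde e}$ for $x\in A'$, $\tilde\pi(z)=\left(1+\tilde\nu(I-\tilde B)^{-1}\tilde e\right)^{-1}$, and $\tilde\pi(y)=0$ for $y\in S\setminus A$. Here $\tilde\pi_n$ denotes this object with $A=A_n$. *)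

From HB Require Import structures.
From mathcomp Require Import all_boot all_order all_algebra.
From mathcomp Require Import finmap.
From mathcomp Require Import all_classical all_reals all_analysis.
Set Implicit Arguments. Unset Strict Implicit. Unset Printing Implicit Defensive.
Import Order.TTheory GRing.Theory Num.Theory.
Import numFieldNormedType.Exports.
Local Open Scope classical_set_scope.
Local Open Scope ring_scope.
Local Open Scope fset_scope.

Section MC.
Variables (R : realType) (S : countType).
Implicit Types (P : S -> S -> R).

Definition stochastic P :=
  (forall x y, 0 <= P x y) /\
  (forall x, (\esum_(y in [set: S]) (P x y)%:E = 1)%E).

(* irreducible: every y is reachable from every x along a path of
   positive-probability transitions (i.e. P^n(x,y) > 0 for some n). *)
Definition irreducible P :=
  forall x y, exists s : seq S,
    path (fun a b => 0 < P a b) x s && (last x s == y).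

(* first_passage P n x y = P_x(first visit to y at a time >= 1 happens at time n+1) *)
Fixpoint first_passage P (n : nat) (x y : S) : \bar R :=
  match n with
  | 0 => (P x y)%:E
  | m.+1 => (\esum_(w in [set w | w <> y]) ((P x w)%:E * first_passage P m w y))%E
  end.

(* x is positive recurrent: return to x is certain, with finite mean return time *)
Definition positive_recurrent_state P (x : S) :=
  (\esum_(n in [set: nat]) first_passage P n x x = 1)%E /\
  (\esum_(n in [set: nat]) ((n.+1)%:R%:E * first_passage P n x x) < +oo)%E.

Definition positive_recurrent P := forall x, positive_recurrent_state P x.

Definition stationary_distribution P (pi : S -> R) :=
  (forall x, 0 <= pi x) /\
  (\esum_(x in [set: S]) (pi x)%:E = 1)%E /\
  (forall y, (\esum_(x in [set: S]) ((pi x)%:E * (P x y)%:E) = (pi y)%:E)%E).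

Section Trunc.
Variables (P : S -> S -> R) (z : S) (A : {fset S}).
Let s : seq S := enum_fset (A `\ z).
Let k : nat := size s.
Definition trunc_B : 'M[R]_k := \matrix_(i < k, j < k) P (nth z s i) (nth z s j).
Definition trunc_nu : 'rV[R]_k := \row_(j < k) P z (nth z s j).
Definition trunc_v : 'rV[R]_k := trunc_nu *m invmx (1%:M - trunc_B).
Definition trunc_den : R := 1 + \sum_(j < k) trunc_v 0 j.
Definition trunc_pi (x : S) : R :=
  if x == z then trunc_den^-1
  else (\sum_(j < k) (if nth z s j == x then trunc_v 0 j else 0)) / trunc_den.
End Trunc.
End MC.

From HB Require Import structures.
From mathcomp Require Import all_boot all_order all_algebra.
From mathcomp Require Import finmap.
From mathcomp Require Import all_classical all_reals all_analysis.
From mathcomp Require Import lra.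

(* Let u be the unnormalised approximation: u z = 1 and u = nu (I - B)^-1 on
   A' = A \ {z}.  Then u is P-invariant on A' and trunc_pi = u / (sum of u over A).
   The defect D = pi - pi z * u vanishes at z and satisfies D = D B + r on A',
   where r >= 0 is the part of the stationary flow into A' that comes from outside A.
   A minimum principle (a function w with w B <= w on A' is nonnegative there,
   because z can be reached from every state) makes I - B invertible and gives
   0 <= D <= pi.  Summing D = D B + r bounds the total outside inflow by pi(S \ A),
   and along a positive path from x to z the defect D x, weighted by the path
   probability, is either passed on inside A' or escapes, so it is bounded by that
   inflow.  Hence D -> 0 pointwise, dominated convergence against pi gives
   sum_A D -> 0, so pi z * sum_A u = sum_A (pi - D) -> 1, and
   trunc_pi x = (pi x - D x) / (pi z * sum_A u) -> pi x. *)

Set Implicit Arguments.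
Unset Strict Implicit.
Unset Printing Implicit Defensive.

Import Order.TTheory GRing.Theory Num.Theory.
Import numFieldNormedType.Exports.
Local Open Scope classical_set_scope.
Local Open Scope ring_scope.

Lemma near_all_in (T : Type) (F : set_system T) (I : eqType) (X : seq I)
    (Q : I -> T -> Prop) :
  Filter F -> (forall i, \forall t \near F, Q i t) ->
  \forall t \near F, forall i, i \in X -> Q i t.
Proof.
move=> FF QF; elim: X => [|i X IH]; first exact: nearW.
apply: filterS2 (QF i) IH => t Qit QXt j.
by rewrite in_cons => /predU1P[->|/QXt].
Qed.

Section NonnegSums.
Variables (R : realType) (S : countType).
Implicit Types (f : S -> R) (s t : seq S).

Lemma ler_sum_subset [f s t] : uniq s -> uniq t -> {subset s <= t} ->
  (forall x, x \in t -> 0 <= f x) -> \sum_(x <- s) f x <= \sum_(x <- t) f x.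
Proof.
move=> us ut st f0; rewrite [leRHS](bigID (mem s)) /=.
have -> : \sum_(x <- t | x \in s) f x = \sum_(x <- s) f x.
  rewrite -big_filter; apply/perm_big/uniq_perm; rewrite ?filter_uniq // => x.
  by rewrite mem_filter andb_idr //; exact: st.
by rewrite lerDl big_seq_cond sumr_ge0 // => x /andP[/f0].
Qed.

Lemma ler_sum_mem [f t] x : uniq t -> x \in t ->
  (forall y, y \in t -> 0 <= f y) -> f x <= \sum_(y <- t) f y.
Proof.
move=> ut xt f0; rewrite (bigD1_seq x) //= lerDl big_seq_cond.
by rewrite sumr_ge0 // => y /andP[/f0].
Qed.

Lemma sum_le_esum f s : (forall x, 0 <= f x) -> uniq s ->
  ((\sum_(x <- s) f x)%:E <= \esum_(x in [set: S]) (f x)%:E)%E.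
Proof.
move=> f0 us; apply: esum_ge; exists [set` s].
  by split=> //; exact: finite_seq.
by rewrite -fsbig_seq // sumEFin.
Qed.

Variables (g : S -> R) (a : R).
Hypotheses (g0 : forall x, 0 <= g x) (ga : \esum_(x in [set: S]) (g x)%:E = a%:E).

Lemma sum_le_total s : uniq s -> \sum_(x <- s) g x <= a.
Proof. by move=> us; rewrite -lee_fin -ga sum_le_esum. Qed.

Lemma sum_disjoint_le [s t] : uniq s -> uniq t ->
  (forall x, x \in t -> x \notin s) ->
  \sum_(x <- t) g x <= a - \sum_(x <- s) g x.
Proof.
move=> us ut dst; rewrite lerBrDl -big_cat /= sum_le_total // cat_uniq us ut andbT.
by apply/hasPn => x /dst.
Qed.

Lemma esum_sum_approx eps : 0 < eps ->
  exists2 s, uniq s & a - eps < \sum_(x <- s) g x.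
Proof.
move=> e0; have : ((a - eps)%:E < \esum_(x in [set: S]) (g x)%:E)%E.
  by rewrite ga lte_fin ltrBlDr ltrDl.
case/ereal_sup_gt => _ [X [finX _] <-].
rewrite fsbig_finite // sumEFin lte_fin => lt_sum.
by exists (fset_set X) => //; exact: fset_uniq.
Qed.

Lemma esum_le_sum_tail (h : S -> R) s : (forall x, 0 <= h x <= g x) -> uniq s ->
  (\esum_(x in [set: S]) (h x)%:E <=
    (\sum_(x <- s) h x + (a - \sum_(x <- s) g x))%:E)%E.
Proof.
move=> hg us.
have fin_sum (k : S -> R) : (forall x, 0 <= k x) ->
    \esum_(x in [set: S] `&` [set` s]) (k x)%:E = (\sum_(x <- s) k x)%:E.
  move=> k0; rewrite setTI esum_fset; first by rewrite -fsbig_seq // sumEFin.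
  - exact: finite_seq.
  - by move=> x _; rewrite lee_fin.
rewrite (esumID [set` s]) => [|x _]; last by rewrite lee_fin; case/andP: (hg x).
rewrite fin_sum => [|x]; last by case/andP: (hg x).
rewrite EFinD leeD2l //.
have := ga; rewrite (esumID [set` s]) => [|x _]; last by rewrite lee_fin.
rewrite (fin_sum g g0) => gs.
apply: le_trans (@le_esum _ _ _ _ (fun x => (g x)%:E) _) _ => [x _|].
  by rewrite lee_fin; case/andP: (hg x).
move: gs; case: (\esum_(x in _ `&` _) _)%E => [r||] //= [<-].
by rewrite addrAC subrr add0r.
Qed.

Lemma sum_exhaust_cvg (t : nat -> seq S) : (forall n, uniq (t n)) ->
  (forall x, \forall n \near \oo, x \in t n) ->
  (fun n => \sum_(x <- t n) g x) @ \oo --> a.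
Proof.
move=> ut tx; apply/cvgrPdist_le => eps e0.
have [X uX ltX] := esum_sum_approx e0.
near=> n.
have sXt : {subset X <= t n} by near: n; exact: near_all_in.
have := ler_sum_subset uX (ut n) sXt (fun x _ => g0 x).
rewrite ger0_norm ?subr_ge0 ?sum_le_total //; lra.
Unshelve. all: by end_near.
Qed.

Lemma sum_dominated_cvg0 (f : nat -> S -> R) (t : nat -> seq S) :
  (forall n, uniq (t n)) -> (forall n x, 0 <= f n x <= g x) ->
  (forall x, f ^~ x @ \oo --> 0) ->
  (fun n => \sum_(x <- t n) f n x) @ \oo --> 0.
Proof.
move=> ut fg f0; apply/cvgrPdist_le => eps e0.
have e2 : 0 < eps / 2 by rewrite divr_gt0.
have [X uX ltX] := esum_sum_approx e2.
have fX0 : (fun n => \sum_(x <- X) f n x) @ \oo --> 0.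
  suff : (fun n => \sum_(x <- X) f n x) @ \oo --> \sum_(x <- X) (0 : R).
    by rewrite big1.
  by apply: cvg_big => [|x _]; [exact: add_continuous|exact: f0].
near=> n.
have fge0 x : 0 <= f n x by case/andP: (fg n x).
rewrite sub0r normrN ger0_norm ?sumr_ge0 // (bigID (mem X)) /=.
have in_X : \sum_(x <- t n | x \in X) f n x <= \sum_(x <- X) f n x.
  rewrite -big_filter ler_sum_subset ?filter_uniq // => x.
  by rewrite mem_filter => /andP[].
have out_X : \sum_(x <- t n | x \notin X) f n x <= a - \sum_(x <- X) g x.
  apply: le_trans (sum_disjoint_le uX (filter_uniq _ (ut n)) _).
    by rewrite big_filter; apply: ler_sum => x _; case/andP: (fg n x).
  by move=> x; rewrite mem_filter => /andP[].
have : \sum_(x <- X) f n x <= eps / 2.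
  near: n; move/cvgr0_norm_le: fX0 => /(_ _ e2).
  by apply: filterS => n; exact: le_trans (ler_norm _).
lra.
Unshelve. all: by end_near.
Qed.

End NonnegSums.

Lemma path_last_in (T : Type) (e : rel T) (N : {pred T}) :
  (forall x y, x \in N -> e x y -> y \in N) ->
  forall x p, x \in N -> path e x p -> last x p \in N.
Proof.
move=> closedN x p; elim: p x => [|y p IH] x //= Nx /andP[exy pp].
exact/IH/pp/(closedN x).
Qed.

Section Stochastic.
Variables (R : realType) (S : countType) (P : S -> S -> R).
Hypothesis stP : stochastic P.

Lemma stochastic_ge0 x y : 0 <= P x y.
Proof. exact: stP.1. Qed.

Lemma stochastic_sum_le1 x (s : seq S) : uniq s -> \sum_(y <- s) P x y <= 1.
Proof. exact/sum_le_total/(stP.2 x)/stochastic_ge0. Qed.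

Lemma stochastic_le1 x y : P x y <= 1.
Proof. by have := stochastic_sum_le1 x (s := [:: y]); rewrite big_seq1; exact. Qed.

Lemma stochastic_out_eq0 [x : S] [N : seq S] [y : S] : uniq N ->
  1 <= \sum_(u <- N) P x u -> y \notin N -> P x y = 0.
Proof.
move=> uN N1 yN; apply/eqP; rewrite eq_le stochastic_ge0 andbT.
have := stochastic_sum_le1 x (s := y :: N); rewrite /= yN uN big_cons => /(_ erefl).
lra.
Qed.

Fixpoint path_prob (x : S) (p : seq S) : R :=
  if p is y :: p' then P x y * path_prob y p' else 1.

Lemma path_prob_ge0 x p : 0 <= path_prob x p.
Proof. by elim: p x => [|y p IH] x //=; rewrite mulr_ge0 ?stochastic_ge0. Qed.

Lemma path_prob_le1 x p : path_prob x p <= 1.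
Proof.
elim: p x => [|y p IH] x //=; rewrite -[1]mulr1.
by rewrite ler_pM ?stochastic_ge0 ?path_prob_ge0 ?stochastic_le1.
Qed.

Lemma path_prob_gt0 x p : path (fun a b => 0 < P a b) x p -> 0 < path_prob x p.
Proof. by elim: p x => [|y p IH] x //= /andP[Pxy /IH]; exact: mulr_gt0. Qed.

Hypothesis irrP : irreducible P.

(* Minimum principle: on the negative part N of w all the mass of P stays in N,
   so no path could leave N to reach z. *)
Lemma subinvariant_ge0 (z : S) (s : seq S) (w : S -> R) : uniq s -> z \notin s ->
  (forall y, y \in s -> \sum_(x <- s) w x * P x y <= w y) ->
  forall y, y \in s -> 0 <= w y.
Proof.
move=> us zs wsub y0 y0s; rewrite leNgt; apply/negP => wy0.
pose N := [seq x <- s | w x < 0].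
have uN : uniq N by exact: filter_uniq.
have Ns x : x \in N -> x \in s by rewrite mem_filter => /andP[].
have Nneg x : x \in N -> w x < 0 by rewrite mem_filter => /andP[].
pose PN x := \sum_(y <- N) P x y.
have mass_in : 0 <= \sum_(x <- N) w x * (1 - PN x).
  have flow : \sum_(x <- s) w x * PN x <= \sum_(y <- N) w y.
    under eq_bigr do rewrite mulr_sumr.
    rewrite exchange_big /= big_seq [leRHS]big_seq.
    by apply: ler_sum => y /Ns /wsub.
  have drop : \sum_(x <- N) w x * PN x <= \sum_(x <- s) w x * PN x.
    rewrite [leRHS](bigID (fun x => w x < 0)) /= big_filter lerDl sumr_ge0 // => x.
    rewrite -leNgt => wx; rewrite mulr_ge0 // sumr_ge0 // => y _.
    exact: stochastic_ge0.
  under eq_bigr do rewrite mulrBr mulr1.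
  by rewrite sumrB subr_ge0 (le_trans drop flow).
have PN1 x : x \in N -> 1 <= PN x.
  move=> xN; have := Nneg x xN; suff : 0 <= w x * (1 - PN x) by nra.
  apply: le_trans mass_in _; rewrite -lerN2 -[leRHS]sumrN.
  apply: (ler_sum_mem (f := fun y => - (w y * (1 - PN y)))) => // y yN.
  rewrite oppr_ge0 mulr_le0_ge0 ?subr_ge0 ?stochastic_sum_le1 //.
  exact/ltW/Nneg.
have /Ns : z \in N.
  have [p /andP[pp /eqP <-]] := irrP y0 z.
  apply: path_last_in pp; last by rewrite mem_filter wy0.
  move=> x y xN; apply: contraTT => yN; rewrite -leNgt.
  by rewrite (stochastic_out_eq0 uN (PN1 x xN) yN).
by rewrite (negbTE zs).
Qed.

End Stochastic.

Section Stationary.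
Variables (R : realType) (S : countType) (P : S -> S -> R) (pi : S -> R).
Hypotheses (stP : stochastic P) (piP : stationary_distribution P pi).

Lemma stationary_ge0 x : 0 <= pi x.
Proof. exact: piP.1. Qed.

Lemma stationary_flow_le y (s : seq S) : uniq s ->
  \sum_(x <- s) pi x * P x y <= pi y.
Proof.
move=> us; rewrite -lee_fin -(piP.2.2 y).
under eq_esum do rewrite -EFinM.
by rewrite sum_le_esum // => x; rewrite mulr_ge0 ?stationary_ge0 ?stochastic_ge0.
Qed.

Lemma stationary_path_le x p : pi x * path_prob P x p <= pi (last x p).
Proof.
elim: p x => [|y p IH] x /=; first by rewrite mulr1.
apply: le_trans (IH y); rewrite mulrA ler_wpM2r ?path_prob_ge0 //.
by have := stationary_flow_le y (s := [:: x]); rewrite big_seq1; exact.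
Qed.

Lemma stationary_gt0 : irreducible P -> forall z, 0 < pi z.
Proof.
move=> irrP z; have [x pix] : exists x, 0 < pi x.
  apply/not_existsP => pi0; have := piP.2.1.
  rewrite esum1 => [[] /eqP|x _]; first by rewrite eq_sym oner_eq0.
  by apply/eqP; rewrite eqe eq_le stationary_ge0 leNgt andbT; apply/negP/pi0.
have [p /andP[pp /eqP <-]] := irrP x z.
apply: lt_le_trans (stationary_path_le x p).
by rewrite mulr_gt0 // path_prob_gt0.
Qed.

Lemma esum_stationary_flow (s : seq S) :
  \esum_(x in [set: S]) (pi x * \sum_(y <- s) P x y)%:E = (\sum_(y <- s) pi y)%:E.
Proof.
rewrite -sumEFin; under [RHS]eq_bigr => y _ do rewrite -(piP.2.2 y).
rewrite -esum_sum => [|x y _ _]; last first.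
  by rewrite -EFinM lee_fin mulr_ge0 ?stationary_ge0 ?stochastic_ge0.
apply: eq_esum => x _; rewrite mulr_sumr -sumEFin.
by apply: eq_bigr => y _; rewrite EFinM.
Qed.

End Stationary.

Section RestrictedMatrix.
Variables (R : realType) (S : countType) (P : S -> S -> R) (z : S) (s : seq S).
Hypothesis us : uniq s.

Definition restr_mx : 'M[R]_(size s) := \matrix_(i, j) P (nth z s i) (nth z s j).

Definition row_fun (w : 'rV[R]_(size s)) (y : S) : R :=
  \sum_(j < size s) (if nth z s j == y then w 0 j else 0).

Lemma row_fun_nth w (j : 'I_(size s)) : row_fun w (nth z s j) = w 0 j.
Proof.
rewrite /row_fun (bigD1 j) //= eqxx big1 ?addr0 // => i ij.
by rewrite nth_uniq // ?(inj_eq val_inj) (negbTE ij).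
Qed.

Lemma row_fun_notin w y : y \notin s -> row_fun w y = 0.
Proof.
move=> ys; rewrite /row_fun big1 // => j _; case: eqP => // jy.
by move: ys; rewrite -jy mem_nth.
Qed.

Lemma mul_row_restr w (j : 'I_(size s)) :
  (w *m (1%:M - restr_mx)) 0 j =
  row_fun w (nth z s j) - \sum_(x <- s) row_fun w x * P x (nth z s j).
Proof.
rewrite mulmxBr mulmx1 !mxE row_fun_nth (big_nth z) big_mkord; congr (_ - _).
by apply: eq_bigr => i _; rewrite row_fun_nth mxE.
Qed.

(* A kernel vector w is invariant on s, so w and -w are both nonnegative. *)
Lemma restr_mx_unit : stochastic P -> irreducible P -> z \notin s ->
  1%:M - restr_mx \in unitmx.
Proof.
move=> stP irrP zs; rewrite -row_free_unit -kermx_eq0.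
apply/eqP/row_matrixP => i.
set w := row i _; rewrite row0.
have w0 : w *m (1%:M - restr_mx) = 0 by apply/sub_kermxP; exact: row_sub.
have w_inv y : y \in s -> \sum_(x <- s) row_fun w x * P x y = row_fun w y.
  move=> /(nthP z)[j js <-]; have := mul_row_restr w (Ordinal js).
  by rewrite w0 mxE => /esym/eqP; rewrite subr_eq0 => /eqP.
apply/rowP => j; rewrite [RHS]mxE -(row_fun_nth w j); apply/eqP; rewrite eq_le.
rewrite -oppr_ge0 (subinvariant_ge0 stP irrP (w := fun y => - row_fun w y) us zs)
  ?(subinvariant_ge0 stP irrP us zs) ?mem_nth // => y ys; rewrite ?w_inv //.
by under eq_bigr do rewrite mulNr; rewrite sumrN w_inv.
Qed.

End RestrictedMatrix.

Section TruncationWeight.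
Variables (R : realType) (S : countType) (P : S -> S -> R) (z : S) (A : {fset S}).
Hypotheses (stP : stochastic P) (irrP : irreducible P).
Local Notation s := (enum_fset (A `\ z)%fset).

Definition trunc_weight (x : S) : R :=
  if x == z then 1 else row_fun z (trunc_v P z A) x.

Lemma trunc_support_uniq : uniq s.
Proof. exact: fset_uniq. Qed.

Lemma mem_trunc_support x : (x \in s) = (x != z) && (x \in A).
Proof. by rewrite -in_fsetD1. Qed.

Lemma trunc_support_notin : z \notin s.
Proof. by rewrite mem_trunc_support eqxx. Qed.

Lemma trunc_cons_uniq : uniq (z :: s).
Proof. by rewrite /= trunc_support_notin trunc_support_uniq. Qed.

Lemma trunc_weight_out x : x \notin z :: s -> trunc_weight x = 0.
Proof.
rewrite in_cons negb_or => /andP[/negbTE xz xs].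
by rewrite /trunc_weight xz row_fun_notin.
Qed.

Lemma trunc_weight_in x : x \in s -> trunc_weight x = row_fun z (trunc_v P z A) x.
Proof.
move=> xs; rewrite /trunc_weight ifN //.
by apply: contraTneq xs => ->; exact: trunc_support_notin.
Qed.

Lemma trunc_unit : 1%:M - trunc_B P z A \in unitmx.
Proof. exact: (restr_mx_unit trunc_support_uniq stP irrP trunc_support_notin). Qed.

Lemma trunc_weight_eq y : y \in s ->
  trunc_weight y = \sum_(x <- z :: s) trunc_weight x * P x y.
Proof.
move=> ys; rewrite big_cons {2}/trunc_weight eqxx mul1r trunc_weight_in //.
rewrite (eq_big_seq (fun x => row_fun z (trunc_v P z A) x * P x y)) => [|x xs];
  last by rewrite trunc_weight_in.
have /(nthP z)[j js <-] := ys.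
have := mul_row_restr P z trunc_support_uniq (trunc_v P z A) (Ordinal js).
rewrite [trunc_v P z A *m _]mulmxKV ?trunc_unit // mxE /= => ->.
by rewrite subrK.
Qed.

Lemma trunc_weight_ge0 x : 0 <= trunc_weight x.
Proof.
have [xs|xs] := boolP (x \in s); last first.
  by rewrite /trunc_weight; case: eqP => // _; rewrite row_fun_notin.
apply: (subinvariant_ge0 stP irrP trunc_support_uniq trunc_support_notin) => // y ys.
rewrite [leRHS]trunc_weight_eq // big_cons lerDr.
by rewrite /trunc_weight eqxx mul1r stochastic_ge0.
Qed.

Lemma trunc_den_weight : trunc_den P z A = \sum_(x <- z :: s) trunc_weight x.
Proof.
rewrite big_cons [trunc_weight z]/trunc_weight eqxx (big_nth z) big_mkord.
congr (1 + _).
apply: eq_bigr => j _.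
by rewrite trunc_weight_in ?mem_nth // (row_fun_nth z trunc_support_uniq).
Qed.

Lemma trunc_pi_weight x : trunc_pi P z A x = trunc_weight x / trunc_den P z A.
Proof. by rewrite /trunc_pi /trunc_weight; case: eqP; rewrite ?div1r. Qed.

End TruncationWeight.

Section TruncationDefect.
Variables (R : realType) (S : countType) (P : S -> S -> R) (pi : S -> R) (z : S)
  (A : {fset S}).
Hypotheses (stP : stochastic P) (irrP : irreducible P)
  (piP : stationary_distribution P pi).
Local Notation s := (enum_fset (A `\ z)%fset).
Local Notation u := (trunc_weight P z A).

Definition trunc_defect (y : S) : R := pi y - pi z * u y.

Definition inflow_deficit (y : S) : R := pi y - \sum_(x <- z :: s) pi x * P x y.

Definition trunc_leak : R := \sum_(y <- s) inflow_deficit y.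

Local Notation D := trunc_defect.

Lemma inflow_deficit_ge0 y : 0 <= inflow_deficit y.
Proof.
by rewrite /inflow_deficit subr_ge0 (stationary_flow_le stP piP) ?trunc_cons_uniq.
Qed.

Lemma trunc_defect_z : D z = 0.
Proof. by rewrite /D /trunc_weight eqxx mulr1 subrr. Qed.

Lemma trunc_defect_eq y : y \in s ->
  D y = \sum_(x <- s) D x * P x y + inflow_deficit y.
Proof.
move=> ys; have <- : \sum_(x <- z :: s) D x * P x y = \sum_(x <- s) D x * P x y.
  by rewrite big_cons trunc_defect_z mul0r add0r.
rewrite (eq_bigr (fun x => pi x * P x y - pi z * (u x * P x y))) => [|x _]; last first.
  by rewrite /D mulrBl mulrA.
rewrite sumrB -mulr_sumr -trunc_weight_eq // /D /inflow_deficit; lra.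
Qed.

Lemma trunc_defect_ge0 y : 0 <= D y.
Proof.
have [ys|ys] := boolP (y \in s).
  apply: (subinvariant_ge0 stP irrP (w := D) (trunc_support_uniq z A)
    (trunc_support_notin z A)) => // x xs.
  by rewrite [leRHS]trunc_defect_eq // lerDl inflow_deficit_ge0.
have [->|yz] := eqVneq y z; first by rewrite trunc_defect_z.
rewrite /D trunc_weight_out ?mulr0 ?subr0 ?(stationary_ge0 piP) //.
by rewrite in_cons negb_or yz.
Qed.

Lemma trunc_defect_le y : D y <= pi y.
Proof.
by rewrite /D gerBl mulr_ge0 ?trunc_weight_ge0 ?(stationary_ge0 piP).
Qed.

Lemma trunc_defect_step x y : x \in s -> y \in s -> D x * P x y <= D y.
Proof.
move=> xs ys; rewrite [leRHS]trunc_defect_eq // ler_wpDr ?inflow_deficit_ge0 //.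
apply: (ler_sum_mem (f := fun v => D v * P v y)) => // [|v _].
  exact: trunc_support_uniq.
by rewrite mulr_ge0 ?trunc_defect_ge0 ?stochastic_ge0.
Qed.

Lemma trunc_leak_eq :
  trunc_leak = \sum_(x <- s) D x * (1 - \sum_(y <- s) P x y).
Proof.
have sumD : \sum_(y <- s) D y =
    \sum_(x <- s) D x * \sum_(y <- s) P x y + trunc_leak.
  rewrite (eq_big_seq (fun y => \sum_(x <- s) D x * P x y + inflow_deficit y)).
    rewrite big_split /= exchange_big; congr (_ + _).
    by apply: eq_bigr => x _; rewrite mulr_sumr.
  by move=> y ys; rewrite trunc_defect_eq.
under eq_bigr do rewrite mulrBr mulr1.
by rewrite sumrB sumD addrAC subrr add0r.
Qed.

Lemma trunc_defect_out_le x w : x \in s -> w \notin s -> D x * P x w <= trunc_leak.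
Proof.
move=> xs ws; rewrite trunc_leak_eq.
apply: le_trans (ler_sum_mem (f := fun v => D v * (1 - \sum_(y <- s) P v y)) _ xs _).
- rewrite ler_wpM2l ?trunc_defect_ge0 // lerBrDr.
  have := stochastic_sum_le1 stP x (s := w :: s).
  by rewrite big_cons /= ws trunc_support_uniq; apply.
- exact: trunc_support_uniq.
- move=> v _; rewrite mulr_ge0 ?trunc_defect_ge0 // subr_ge0.
  exact/(stochastic_sum_le1 stP)/trunc_support_uniq.
Qed.

Lemma trunc_defect_path_le x p : x \in s ->
  path (fun a b => 0 < P a b) x p -> last x p = z ->
  D x * path_prob P x p <= trunc_leak.
Proof.
elim: p x => [|y p IH] x xs /=.
  by move=> _ xz; move: xs; rewrite xz (negbTE (trunc_support_notin z A)).
move=> /andP[Pxy pp] lpz; rewrite mulrA.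
have [ys|ys] := boolP (y \in s).
  apply: le_trans (IH y ys pp lpz); rewrite ler_wpM2r ?path_prob_ge0 //.
  exact: trunc_defect_step.
apply: le_trans (trunc_defect_out_le xs ys); rewrite ler_piMr ?path_prob_le1 //.
by rewrite mulr_ge0 ?trunc_defect_ge0 ?stochastic_ge0.
Qed.

Lemma trunc_leak_le : trunc_leak <= 1 - \sum_(x <- z :: s) pi x.
Proof.
pose h x := pi x * \sum_(y <- s) P x y.
have hpi x : 0 <= h x <= pi x.
  rewrite mulr_ge0 ?sumr_ge0 ?(stationary_ge0 piP) // => [|y _]; last first.
    exact: stochastic_ge0.
  by rewrite ler_piMr ?(stationary_ge0 piP) ?stochastic_sum_le1 ?trunc_support_uniq.
have := esum_le_sum_tail (stationary_ge0 piP) piP.2.1 hpi (trunc_cons_uniq z A).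
rewrite esum_stationary_flow // lee_fin.
have -> : trunc_leak = \sum_(y <- s) pi y - \sum_(x <- z :: s) h x.
  rewrite /trunc_leak /inflow_deficit sumrB exchange_big /=; congr (_ - _).
  by apply: eq_bigr => x _; rewrite /h mulr_sumr.
lra.
Qed.

Lemma trunc_den_defect : pi z * trunc_den P z A = \sum_(x <- z :: s) (pi x - D x).
Proof.
rewrite trunc_den_weight mulr_sumr; apply: eq_bigr => x _.
by rewrite /D opprB addrC subrK.
Qed.

Lemma trunc_pi_defect x :
  trunc_pi P z A x = (pi x - D x) / (pi z * trunc_den P z A).
Proof.
have pz0 : pi z != 0 by rewrite gt_eqF // (stationary_gt0 stP piP irrP).
by rewrite trunc_pi_weight /D opprB addrC subrK invfM mulrACA mulfV // mul1r.
Qed.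

End TruncationDefect.

Lemma exhausting_near (S : choiceType) (A : nat -> {fset S}) :
  (forall n, (1 <= n)%N -> fsubset (A n) (A n.+1)) ->
  (forall x, exists2 n, (1 <= n)%N & x \in A n) ->
  forall x, \forall n \near \oo, x \in A n.
Proof.
move=> incrA coverA x; have [m m1 xm] := coverA x.
exists m => // n /= /subnK <-; elim: (n - m)%N => // k IH.
by rewrite addSn; apply: (fsubsetP (incrA _ _)) IH; rewrite addn_gt0 m1 orbT.
Qed.

Section Convergence.
Variables (R : realType) (S : countType) (P : S -> S -> R) (pi : S -> R) (z : S)
  (A : nat -> {fset S}).
Hypotheses (stP : stochastic P) (irrP : irreducible P)
  (piP : stationary_distribution P pi).
Hypothesis A_near : forall x, \forall n \near \oo, x \in A n.
Local Notation s n := (enum_fset (A n `\ z)%fset).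
Local Notation D n := (trunc_defect P pi z (A n)).

Lemma trunc_support_near x : \forall n \near \oo, x \in z :: s n.
Proof.
apply: filterS (A_near x) => n xA.
by rewrite in_cons mem_trunc_support xA andbT; case: eqP.
Qed.

Lemma trunc_mass_cvg : (fun n => \sum_(x <- z :: s n) pi x) @ \oo --> (1 : R).
Proof.
apply: (sum_exhaust_cvg (stationary_ge0 piP) piP.2.1) trunc_support_near => n.
exact: trunc_cons_uniq.
Qed.

Lemma trunc_defect_cvg0 x : (fun n => D n x) @ \oo --> 0.
Proof.
have [->|xz] := eqVneq x z.
  by under eq_fun do rewrite trunc_defect_z; exact: cvg_cst.
have [p /andP[pp /eqP pz]] := irrP x z.
have q0 := path_prob_gt0 pp.
apply: (@squeeze_cvgr _ _ _ _ (cst 0)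
  (fun n => (1 - \sum_(x <- z :: s n) pi x) / path_prob P x p)).
- apply: filterS (trunc_support_near x) => n.
  rewrite in_cons (negbTE xz) /= => xs.
  rewrite trunc_defect_ge0 //= ler_pdivlMr //.
  exact: le_trans (trunc_defect_path_le stP irrP piP xs pp pz)
    (trunc_leak_le _ _ stP piP).
- exact: cvg_cst.
- suff : (fun n => (1 - \sum_(x <- z :: s n) pi x) / path_prob P x p) @ \oo -->
      (1 - 1) * (path_prob P x p)^-1 by rewrite subrr mul0r.
  by apply: cvgM; [apply: cvgB trunc_mass_cvg|]; exact: cvg_cst.
Qed.

Lemma trunc_den_cvg : (fun n => pi z * trunc_den P z (A n)) @ \oo --> (1 : R).
Proof.
under eq_fun do rewrite (trunc_den_defect P pi) sumrB.
rewrite -[1](subr0 1); apply: cvgB trunc_mass_cvg _.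
apply: (sum_dominated_cvg0 (stationary_ge0 piP) piP.2.1) trunc_defect_cvg0 => n.
  exact: trunc_cons_uniq.
by move=> x; rewrite trunc_defect_ge0 ?trunc_defect_le.
Qed.

Lemma trunc_pi_cvg x : (fun n => trunc_pi P z (A n) x) @ \oo --> pi x.
Proof.
under eq_fun do rewrite (trunc_pi_defect _ _ stP irrP piP).
suff : (fun n => (pi x - D n x) / (pi z * trunc_den P z (A n))) @ \oo -->
    (pi x - 0) * 1^-1 by rewrite subr0 invr1 mulr1.
apply: cvgM; first exact: cvgB (cvg_cst _) (trunc_defect_cvg0 x).
exact: cvgV (oner_neq0 _) trunc_den_cvg.
Qed.

End Convergence.

Theorem proposition1 (R : realType) (S : countType) (P : S -> S -> R)
    (pi : S -> R) (z : S) (A : nat -> {fset S}) :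
  stochastic P -> irreducible P -> positive_recurrent P ->
  stationary_distribution P pi ->
  z \in A 1%N ->
  (forall n, (1 <= n)%N -> fsubset (A n) (A n.+1)) ->
  (forall x, exists2 n, (1 <= n)%N & x \in A n) ->
  forall x : S, (fun n => trunc_pi P z (A n) x) @ \oo --> pi x.
Proof.
move=> stP irrP _ piP _ incrA coverA.
exact: trunc_pi_cvg stP irrP piP (exhausting_near incrA coverA).
Qed.
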